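(* Let $\mathrm X$ be a locally compact Hausdorff space and $\kappa:\mathrm X\times\mathrm X\to(-\infty,\infty]$ a lower semicontinuous function which is nonnegative unless $\mathrm X\times\mathrm X$ is compact. Assume that $\kappa(x,y)$ is (finite and) continuous for $x\ne y$ and that $\kappa$ has the property $(\infty_{\mathrm X})$: for every $\varepsilon>0$ and every compact $K\subset\mathrm X$ there is a compact $K'\subset\mathrm X$ with $|\kappa(x,y)|<\varepsilon$ for all $x\in K$, $y\in\mathrm X\setminus K'$. Fix a closed set $F\subset\mathrm X$, a closed subset $Q$ of $\mathrm X\setminus F$, and $b\in(0,\infty)$. Then the map $(x,\nu)\mapsto\kappa(x,\nu)=\int\kappa(x,y)\,d\nu(y)$ is continuous on $Q\times\bigl(\mathfrak M^+_F\cap\mathfrak M_b\bigr)$ with respect to the product topology, where $Q$ carries the topology induced from $\mathrm X$ and $\mathfrak M^+_F\cap\mathfrak M_b$ the topology induced by the vague topology of $\mathfrak M$.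
   Context: $\mathfrak M$ is the space of real Radon measures on $\mathrm X$ with the vague topology (pointwise convergence on continuous compactly supported functions). $\mathfrak M^+_F$ is the set of nonnegative Radon measures concentrated on $F$ (for closed $F$: supported in $F$), and $\mathfrak M_b=\{\nu\in\mathfrak M:|\nu|(\mathrm X)\le b\}$. *)

From HB Require Import structures.
From mathcomp Require Import all_boot all_order all_algebra.
From mathcomp Require Import all_classical all_reals all_analysis.
Set Implicit Arguments. Unset Strict Implicit. Unset Printing Implicit Defensive.
Import Order.TTheory GRing.Theory Num.Theory.
Import numFieldNormedType.Exports.
Local Open Scope classical_set_scope.
Local Open Scope ring_scope.

Definition borel (X : ptopologicalType) : measurableType (@open X).-sigma :=
  g_sigma_algebraType (@open X).

Section defs.
Context {X : ptopologicalType} {R : realType}.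
Local Open Scope ereal_scope.

Definition radon (mu : {measure set (borel X) -> \bar R}) : Prop :=
  [/\ (forall K : set X, compact K -> mu K < +oo),
      (forall A : set (borel X), measurable A ->
         mu A = ereal_inf [set mu U | U in [set U : set X | open U /\ A `<=` U]]) &
      (forall U : set X, open U ->
         mu U = ereal_sup [set mu K | K in [set K : set X | compact K /\ K `<=` U]])].

Definition in_MFb (F : set X) (b : R) (nu : {measure set (borel X) -> \bar R}) : Prop :=
  [/\ radon nu, nu (~` F) = 0 & nu setT <= b%:E].

Definition Cc (f : X -> R) : Prop :=
  continuous f /\ compact (closure [set x | f x != 0%R]).

Definition mint (nu : {measure set (borel X) -> \bar R}) (f : X -> R) : \bar R :=
  \int[nu]_(y in setT) (f y)%:E.

Definition potential (kappa : X * X -> \bar R) (x : X)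
  (nu : {measure set (borel X) -> \bar R}) : \bar R :=
  \int[nu]_(y in setT) kappa (x, y).

End defs.

From HB Require Import structures.
From mathcomp Require Import all_boot all_order all_algebra.
From mathcomp Require Import all_classical all_reals all_analysis.
From mathcomp Require Import measurable_realfun lra.
Import Order.TTheory GRing.Theory Num.Theory.
Import numFieldNormedType.Exports.
Local Open Scope classical_set_scope.
Local Open Scope ring_scope.

(* Fix x0 in Q, so x0 is not in F.  By the condition at infinity there is a compact K'
   outside of which kappa (x, .) is uniformly small for x in a compact neighbourhood of x0;
   on the compact set K' /\ F, kappa (x, .) is uniformly close to kappa (x0, .) for x near
   x0.  Cutting kappa (x0, .) off outside K' /\ F therefore gives one f in C_c(X) with
   |kappa (x, y) - f y| <= eps for all y in F and all x near x0.  Every nu in M^+_F /\ M_b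
   lives on F and has mass at most b, so |kappa (x, nu) - nu(f)| <= eps b; since nu |-> nu(f)
   is vaguely continuous, the potential moves by at most 2 eps b + |nu(f) - nu0(f)|. *)

Section integral_approximation.
Context d (T : measurableType d) (R : realType).
Variable nu : {measure set T -> \bar R}.
Local Open Scope ereal_scope.

Lemma integral_ae_close (b c M : R) (g : T -> \bar R) (f : T -> R) :
  nu setT <= b%:E -> (0 <= c)%R ->
  measurable_fun setT g -> measurable_fun setT f -> (forall y, `|f y| <= M)%R ->
  {ae nu, forall y, g y \is a fin_num /\ (`|fine (g y) - f y| <= c)%R} ->
  exists r s, \int[nu]_(y in setT) g y = r%:E /\
    \int[nu]_(y in setT) (f y)%:E = s%:E /\ (`|r - s| <= c * b)%R.
Proof.
move=> nub c0 mg mf fM gf.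
have nuT : nu setT < +oo by exact: le_lt_trans nub (ltry _).
have M0 : (0 <= M)%R by exact: le_trans (fM point).
have mEf : measurable_fun setT (EFin \o f) by exact/measurable_EFinP.
have ig : nu.-integrable setT g.
  apply/integrableP; split => //.
  apply: le_lt_trans (integral_le_bound (M + c)%:E _ _ _ _) _ => //.
  - by rewrite lee_fin addr_ge0.
  - apply: filterS gf => y [gy gyf] _; rewrite -(fineK gy) abse_EFin lee_fin.
    by rewrite -(subrK (f y) (fine (g y))) (le_trans (ler_normD _ _)) // addrC lerD.
  - by rewrite lte_mul_pinfty // lee_fin addr_ge0.
have iF : nu.-integrable setT (EFin \o f).
  apply/integrableP; split => //.
  apply: le_lt_trans (integral_le_bound M%:E _ _ _ _) _ => //.
  - by apply: aeW => y _; rewrite lee_fin.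
  - by rewrite lte_mul_pinfty.
have gfin := integrable_fin_num measurableT ig.
have ffin := integrable_fin_num measurableT iF.
exists (fine (\int[nu]_(y in setT) g y)); exists (fine (\int[nu]_(y in setT) (f y)%:E)).
rewrite !fineK //; split => //; split => //.
rewrite -lee_fin -abse_EFin EFinB !fineK // -integralB //.
have mgf : measurable_fun setT (g \- (EFin \o f)) by exact: emeasurable_funB.
apply: le_trans (le_abse_integral _ _ mgf) _ => //.
apply: le_trans (integral_le_bound c%:E _ mgf _ _) _ => //.
- apply: filterS gf => y [gy gyf] _ /=.
  by rewrite -(fineK gy) -EFinB abse_EFin lee_fin.
- by rewrite EFinM lee_wpmul2l // lee_fin.
Qed.

End integral_approximation.

Section cutoff.
Context {X : ptopologicalType} {R : realType}.
Local Notation opc := (one_point_compactification X).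

Lemma compact_of_disjoint_nbhs_None (S : set X) (W : set opc) :
  closed S -> nbhs (None : opc) W -> (forall x, S x -> ~ W (Some x)) -> compact S.
Proof.
move=> clS [K [cK _] KW] SW; apply: (subclosed_compact clS cK) => x Sx.
by apply: contrapT => Kx; apply: (SW x Sx); apply: KW; left; exists x.
Qed.

Hypotheses (lcX : locally_compact [set: X]) (hX : hausdorff_space X).

Lemma urysohn_one_point_compactification (C : set X) (x0 : X) : compact C -> ~ C x0 ->
  exists g : opc -> R, [/\ continuous g, (forall z, 0 <= g z <= 1),
    (forall x, C x -> g (Some x) = 0), g None = 1 & g (Some x0) = 1].
Proof.
move=> cC Cx0.
have hopc : hausdorff_space opc by exact: one_point_compactification_hausdorff.
have nopc : normal_space opc.
  by apply: compact_normal => //; exact: one_point_compactification_compact.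
pose A : set opc := Some @` C; pose B : set opc := [set None] `|` [set Some x0].
have clA : closed A.
  apply: compact_closed => //; apply: continuous_compact => //.
  exact/continuous_subspaceT/one_point_compactification_some_continuous.
have clB : closed B.
  by apply: closedU; apply: accessible_closed_set1; exact: hausdorff_accessible.
have AB0 : A `&` B = set0.
  by apply/seteqP; split => // _ [[x Cx <-]] [//|[]] xx0; apply: Cx0; rewrite -xx0.
have /(@uniform_separatorP _ R) [g [gc g01 gA gB]] :=
  (proj1 (@normal_separatorP R opc) nopc) A B clA clB AB0.
exists g; split => //.
- by move=> z; have := g01 (g z) (ex_intro2 _ _ z I erefl); rewrite /= in_itv.
- by move=> x Cx; apply: gA; exists (Some x) => //; exists x.
- by apply: gB; exists None => //; left.
- by apply: gB; exists (Some x0) => //; right.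
Qed.

Lemma compact_cutoff (C : set X) (x0 : X) : compact C -> ~ C x0 ->
  exists psi : X -> R, [/\ Cc psi, (forall x, 0 <= psi x <= 1),
    (forall x, C x -> psi x = 1) & \forall y \near x0, psi y = 0].
Proof.
move=> cC Cx0.
have [g [gc g01 gC gNone gx0]] := urysohn_one_point_compactification C x0 cC Cx0.
(* The support of max 0 h lies in [g <= 1/2], a closed set kept away from the point at
   infinity by its neighbourhood [g > 1/2], hence compact. *)
pose h x := 1 - 2 * g (Some x).
have gSc : continuous (g \o Some).
  by move=> x; apply: continuous_comp (gc _);
    exact: one_point_compactification_some_continuous.
have hc : continuous h by move=> x; apply: cvgB (cvg_cst _) (cvgM (cvg_cst _) (gSc x)).
exists (fun x => Num.max 0 (h x)); split.
- split; first by move=> x; exact: continuous_max (cvg_cst _) (hc x).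
  pose S := [set x : X | g (Some x) <= 2^-1].
  have clS : closed S.
    by apply: (@preimage_closed _ _ (g \o Some) [set r : R | r <= 2^-1]);
      [move=> x _; exact: gSc | exact: closed_le].
  have suppS : closure [set x | Num.max 0 (h x) != 0] `<=` S.
    rewrite [X in _ `<=` X](closure_id S).1 //; apply: closureS => x /=; apply: contraNT.
    by rewrite -ltNge => gx; rewrite max_l // /h subr_le0 -ler_pdivrMl // mulr1 ltW.
  suff cS : compact S by apply: (subclosed_compact _ cS) => //; exact: closed_closure.
  apply: (compact_of_disjoint_nbhs_None S [set z : opc | 2^-1 < g z]) => //.
    apply: open_nbhs_nbhs; split; last by rewrite /= gNone invf_lt1 // ltr1n.
    by apply: (@open_comp _ _ g [set r : R | 2^-1 < r]) => [z _|];
      [exact: gc | exact: open_gt].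
  by move=> x /= Sx; rewrite ltNge Sx.
- move=> x; rewrite le_max lexx /= ge_max ler01 /h lerBlDr lerDl.
  by rewrite mulr_ge0 //; case/andP: (g01 (Some x)).
- by move=> x Cx; rewrite /h gC // mulr0 subr0 max_r // ler01.
- have hx0 : h x0 < 0 by rewrite /h gx0 mulr1 subr_lt0 ltr1n.
  near=> y; apply/max_l/ltW; near: y; exact: cvgr_lt (hc x0) _ hx0.
Unshelve. all: by end_near. Qed.

End cutoff.

Section borel_measurability.
Context {X : ptopologicalType} {R : realType}.

Lemma borel_measurable_open (U : set X) : open U -> measurable (U : set (borel X)).
Proof. exact: sub_sigma_algebra. Qed.

Lemma continuous_borel_measurable (f : X -> R) :
  continuous f -> measurable_fun setT (f : borel X -> R).
Proof.
move=> cf; apply: (measurability _ (RGenOInfty.measurableE R)).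
move=> /= _ [_ [x ->] <-]; apply: measurableI => //.
by apply: borel_measurable_open; apply: open_comp => [y _|]; [exact: cf | exact: rray_open].
Qed.

Lemma continuous_pairl (x : X) : continuous (pair x : X -> X * X).
Proof. by move=> y; apply: cvg_pair => /=; [exact: cvg_cst | exact: cvg_id]. Qed.

Lemma lsc_section_borel_measurable (kappa : X * X -> \bar R) (x : X) :
  lower_semicontinuous kappa ->
  measurable_fun setT ((fun y => kappa (x, y)) : borel X -> \bar R).
Proof.
move=> /lower_semicontinuousP lk.
apply: (measurability _ (ErealGenOInfty.measurableE R)).
move=> /= _ [_ [a ->] <-]; apply: measurableI => //.
apply: borel_measurable_open; rewrite preimage_itvoy.
by apply: (@open_comp _ _ (pair x) [set z | (a%:E < kappa z)%E]) => [y _|];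
  [exact: continuous_pairl | exact: lk].
Qed.

End borel_measurability.

Lemma near_fine_close_on_compact {X Y : topologicalType} {R : realType}
    (k : X * Y -> \bar R) (x0 : X) (C : set Y) (eps : R) :
  compact C -> 0 < eps ->
  (forall y, C y -> k (x0, y) \is a fin_num /\ {for (x0, y), continuous k}) ->
  \forall x \near x0, forall y, C y ->
    k (x, y) \is a fin_num /\ `|fine (k (x, y)) - fine (k (x0, y))| < eps.
Proof.
move=> cC e0 kC.
apply: (proj1 (compact_near_coveringP C) cC X (nbhs x0)
  (fun x y => k (x, y) \is a fin_num /\ `|fine (k (x, y)) - fine (k (x0, y))| < eps)).
move=> y Cy; have [kfin kc] := kC y Cy.
have /fine_cvgP [knear kcvg] : k @ (x0, y) --> (fine (k (x0, y)))%:E by rewrite fineK.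
have e20 : 0 < eps / 2 by rewrite divr_gt0.
have : \forall p \near (x0, y),
    k p \is a fin_num /\ `|fine (k (x0, y)) - fine (k p)| < eps / 2.
  near=> p; split; first by near: p; exact: knear.
  by near: p; move/cvgrPdist_lt : kcvg; apply.
case=> -[A B] /= [nA nB] AB; exists (B, A) => //= -[y' x] /= [By' Ax].
have [kxfin dx] := AB (x, y') (conj Ax By').
have [_ dx0] := AB (x0, y') (conj (nbhs_singleton nA) By').
split => //; apply: le_lt_trans (ler_distD (fine (k (x0, y))) _ _) _.
by rewrite (splitr eps) ltrD // distrC.
Unshelve. all: by end_near. Qed.

Lemma continuous_mul_vanishing_near {X : topologicalType} {R : realType}
    (psi h : X -> R) (x0 : X) :
  continuous psi -> (\forall y \near x0, psi y = 0) ->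
  (forall y, y <> x0 -> {for y, continuous h}) -> continuous (psi \* h).
Proof.
move=> psic psi0 hc y; have [->|yx0] := pselect (y = x0); last first.
  exact: cvgM (psic y) (hc y yx0).
have psix0 := nbhs_singleton psi0.
by apply: cvg_near_cst; apply: filterS psi0 => z /= ->; rewrite psix0 !mul0r.
Qed.

Section compact_support.
Context {X : ptopologicalType} {R : realType}.

Lemma Cc_bounded (f : X -> R) : Cc f -> exists M, forall y, `|f y| <= M.
Proof.
move=> [fc suppc].
have [M0 [_ fM0]] := compact_bounded (continuous_compact (continuous_subspaceT fc) suppc).
exists (Num.max (M0 + 1) 0) => y; rewrite le_max; have [fy0|/negPn/eqP ->] := boolP (f y != 0).
  by rewrite fM0 ?ltrDl //; exists y => //; exact: subset_closure.
by rewrite normr0 lexx orbT.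
Qed.

Lemma Cc_mul_continuous (psi h : X -> R) :
  Cc psi -> continuous (psi \* h) -> Cc (psi \* h).
Proof.
move=> [_ psic] c; split => //; apply: (subclosed_compact _ psic) => //.
  exact: closed_closure.
by apply: closureS => y /=; apply: contraNN => /eqP ->; rewrite mul0r.
Qed.

End compact_support.

Section approximation.
Context {X : ptopologicalType} {R : realType} (kappa : X * X -> \bar R).
Hypotheses (lcX : locally_compact [set: X]) (hX : hausdorff_space X).
Hypothesis kappa_lsc : lower_semicontinuous kappa.
Hypothesis kappa_offdiag :
  forall x y, x <> y -> kappa (x, y) \is a fin_num /\ {for (x, y), continuous kappa}.
Hypothesis kappa_infty : forall eps : R, 0 < eps -> forall K : set X, compact K ->
  exists K' : set X, compact K' /\
    forall x y, K x -> ~ K' y -> (`|kappa (x, y)| < eps%:E)%E.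

Variable F : set X.
Hypothesis clF : closed F.

Lemma kernel_Cc_approx (x0 : X) (eps : R) : ~ F x0 -> 0 < eps ->
  exists2 U, nbhs x0 U & exists2 f : X -> R, Cc f &
    forall x y, U x -> ~ F x -> F y ->
      kappa (x, y) \is a fin_num /\ `|fine (kappa (x, y)) - f y| <= eps.
Proof.
move=> Fx0 e0.
have [N + [cN _]] := @lcX x0 I; rewrite withinET => nN.
have e20 : 0 < eps / 2 by rewrite divr_gt0.
have [K' [cK' smallK']] := kappa_infty _ e20 N cN.
pose C := K' `&` F; have cC : compact C by exact: compact_closedI.
have [psi [psiCc psi01 psiC psi0]] :=
  compact_cutoff (R := R) lcX hX C x0 cC (fun C0 => Fx0 C0.2).
have kappa0 y : F y -> kappa (x0, y) \is a fin_num /\ {for (x0, y), continuous kappa}.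
  by move=> Fy; apply: kappa_offdiag => x0y; apply: Fx0; rewrite x0y.
have := near_fine_close_on_compact kappa x0 C eps cC e0 (fun y Cy => kappa0 y Cy.2).
move=> /(filterI nN) nU; eexists; first exact: nU.
pose k0 y := fine (kappa (x0, y)).
exists (psi \* k0).
  apply: (Cc_mul_continuous psi k0 psiCc).
  apply: (continuous_mul_vanishing_near psi k0 x0 psiCc.1 psi0).
  move=> y yx0; have [k0fin k0c] := kappa_offdiag x0 y (nesym yx0).
  have kc := continuous_comp (continuous_pairl x0 y) k0c.
  by apply: fine_cvg; rewrite fineK.
move=> x y [Nx near_x] Fx Fy.
have xy : x <> y by move=> xy; apply: Fx; rewrite xy.
have [kfin _] := kappa_offdiag x y xy.
split => //; have [K'y|K'y] := pselect (K' y).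
  have Cy : C y by split.
  by rewrite /= psiC // mul1r; exact/ltW/(near_x y Cy).2.
have [k0fin _] := kappa0 y Fy.
have := smallK' x y Nx K'y; rewrite -(fineK kfin) abse_EFin lte_fin => kx.
have := smallK' x0 y (nbhs_singleton nN) K'y.
rewrite -(fineK k0fin) abse_EFin lte_fin => kx0.
apply: le_trans (ler_normB _ _) _; rewrite (splitr eps) lerD ?ltW //= normrM.
have /andP [p0 p1] := psi01 y.
by rewrite (ger0_norm p0); apply: le_lt_trans (ler_piMl (normr_ge0 _) p1) _.
Qed.

Lemma potential_Cc_approx (b : R) (x0 : X) (eps : R) : ~ F x0 -> 0 < eps ->
  exists2 U, nbhs x0 U & exists2 f : X -> R, Cc f &
    forall x nu, U x -> ~ F x -> in_MFb F b nu ->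
    exists r s, potential kappa x nu = r%:E /\ mint nu f = s%:E /\ `|r - s| <= eps * b.
Proof.
move=> Fx0 e0.
have [U nU [f fCc kappa_f]] := kernel_Cc_approx x0 eps Fx0 e0.
have [M fM] := Cc_bounded f fCc.
exists U => //; exists f => // x nu Ux Fx [_ nuF nub].
apply: (integral_ae_close _ _ _ _ _ _ _ _ _ nub (ltW e0)
  (lsc_section_borel_measurable kappa x kappa_lsc)
  (continuous_borel_measurable f fCc.1) fM).
exists (~` F); split => //; first by apply: borel_measurable_open; exact: closed_openC.
by move=> y /= kappa_far Fy; apply: kappa_far; exact: kappa_f.
Qed.

Lemma potential_finite (b : R) (x : X) (nu : {measure set (borel X) -> \bar R}) :
  ~ F x -> in_MFb F b nu -> exists r, potential kappa x nu = r%:E.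
Proof.
move=> Fx nuF; have [U nU [f _ approx]] := potential_Cc_approx b x 1 Fx ltr01.
by have [r [_ [-> _]]] := approx x nu (nbhs_singleton nU) Fx nuF; exists r.
Qed.

End approximation.

Lemma dist_lt_quarters {R : realFieldType} (e a b c d : R) :
  `|a - b| <= e / 4 -> `|b - c| < e / 4 -> `|c - d| <= e / 4 -> `|a - d| < e.
Proof.
move=> ab bc cd; apply: le_lt_trans (ler_distD b a d) _.
apply: le_lt_trans (lerD (lexx _) (ler_distD c b d)) _.
have := normr_ge0 (b - c); move: ab bc cd.
move: `|a - b| `|b - c| `|c - d| => u v w; lra.
Qed.

Theorem lemma3p5 (X : ptopologicalType) (R : realType)
  (kappa : X * X -> \bar R) (F Q : set X) (b : R) :
  locally_compact [set: X] ->
  hausdorff_space X ->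
  lower_semicontinuous kappa ->
  (forall z, kappa z != -oo%E) ->
  (~ compact [set: X * X] -> forall z, (0 <= kappa z)%E) ->
  (forall x y, x <> y -> kappa (x, y) \is a fin_num /\ {for (x, y), continuous kappa}) ->
  (forall eps : R, 0 < eps -> forall K : set X, compact K ->
     exists K' : set X, compact K' /\
       forall x y, K x -> ~ K' y -> (`|kappa (x, y)| < eps%:E)%E) ->
  closed F -> closed Q -> Q `<=` ~` F -> 0 < b ->
  forall (x0 : X) (nu0 : {measure set (borel X) -> \bar R}),
    Q x0 -> in_MFb F b nu0 ->
    forall V : set (\bar R), nbhs (potential kappa x0 nu0) V ->
    exists U : set X, nbhs x0 U /\
      exists (n : nat) (f : 'I_n -> X -> R) (delta : R),
        [/\ (forall i, Cc (f i)), 0 < delta &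
            forall (x : X) (nu : {measure set (borel X) -> \bar R}),
              Q x -> in_MFb F b nu -> U x ->
              (forall i, (`|mint nu (f i) - mint nu0 (f i)| < delta%:E)%E) ->
              V (potential kappa x nu)].
Proof.
move=> lcX hX kappa_lsc _ _ kappa_offdiag kappa_infty clF _ QF b0 x0 nu0 Qx0 nu0F V nV.
have finite := potential_finite kappa lcX hX kappa_lsc kappa_offdiag kappa_infty F clF b.
have approx := potential_Cc_approx kappa lcX hX kappa_lsc kappa_offdiag kappa_infty F clF b.
have [p0 P0] := finite x0 nu0 (QF x0 Qx0) nu0F.
rewrite P0 in nV; move/nbhs_EFin/nbhs_ballP : nV => [e /= e0 ball_V].
have eb0 : 0 < e / (4 * b) by rewrite divr_gt0 // mulr_gt0.
have {approx} [U nU [f fCc approx]] := approx x0 _ (QF x0 Qx0) eb0.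
have ebE : e / (4 * b) * b = e / 4 by rewrite invfM mulrA divfK // gt_eqF.
exists U; split => //; exists 1%N, (fun=> f), (e / 4); split => //.
  by rewrite divr_gt0.
move=> x nu Qx nuF Ux /(_ ord0).
have [p [s [-> [-> ps]]]] := approx x nu Ux (QF x Qx) nuF.
have [p0' [s0 [P0' [-> ps0]]]] := approx x0 nu0 (nbhs_singleton nU) (QF x0 Qx0) nu0F.
have {}P0' : p0' = p0 by apply: EFin_inj; rewrite -P0' P0.
subst p0'.
rewrite -EFinB abse_EFin lte_fin ebE in ps ps0 * => ss0.
by apply: ball_V; apply: (dist_lt_quarters _ _ s0 s); rewrite // distrC.
Qed.
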